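(* Let $H$ be the orthocenter of $T=P_1P_2P_3$. (i) For each $i$, the line $P_iP_i''$ is the altitude of $T$ from $P_i$; in particular the three lines $P_iP_i''$ concur at $H$, so $T$ and $T''=P_1''P_2''P_3''$ are perspective with perspector $H$, and the perpendiculars from $P_i''$ to the side of $T$ opposite $P_i$ all pass through $H$. (ii) For each $i$, with $\{i,j,k\}=\{1,2,3\}$, the perpendicular from $P_i$ to the line $P_j''P_k''$ passes through $-M$ (the reflection of $M$ in $O$). Hence $T$ and $T''$ are orthologic with orthology centers $H$ and $-M$.
   Context: Let $a>b>0$ and $c>0$ with $c^2=a^2-b^2$. Let $\mathcal{E}$ be the ellipse $x^2/a^2+y^2/b^2=1$ with center $O=(0,0)$, parametrized by $P(t)=(a\cos t,b\sin t)$. Fix $u\in\mathbb{R}$ and let $M=(a\cos u,b\sin u)$. For $i=1,2,3$ let $t_i=-u/3-2\pi(i-1)/3$, $P_i=P(t_i)$, and $P_i''=\left(\frac{c^2\cos^3 t_i}{a},-\frac{c^2\sin^3 t_i}{b}\right)$ (the center of curvature of $\mathcal{E}$ at $P_i$). Two triangles $ABC$, $DEF$ are orthologic if the perpendiculars from $A,B,C$ to $EF,FD,DE$ respectively are concurrent; the concurrence points of these perpendiculars and of the perpendiculars from $D,E,F$ to $BC,CA,AB$ are the orthology centers. *)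

From Stdlib Require Import Reals Lra.
Open Scope R_scope.

Definition pt := (R * R)%type.
Definition padd (p q : pt) : pt := (fst p + fst q, snd p + snd q).
Definition psub (p q : pt) : pt := (fst p - fst q, snd p - snd q).
Definition popp (p : pt) : pt := (- fst p, - snd p).
Definition dot (p q : pt) : R := fst p * fst q + snd p * snd q.
Definition cross (p q : pt) : R := fst p * snd q - snd p * fst q.

Definition on_line (X A B : pt) : Prop := A <> B /\ cross (psub B A) (psub X A) = 0.
Definition collinear (A B C : pt) : Prop := cross (psub B A) (psub C A) = 0.

Definition on_perp (X A E F : pt) : Prop := E <> F /\ dot (psub X A) (psub F E) = 0.

Definition is_orthocenter (A B C H : pt) : Prop :=
  ~ collinear A B C /\
  on_perp H A B C /\ on_perp H B C A /\ on_perp H C A B.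

Definition perspector (A B C D E F X : pt) : Prop :=
  on_line X A D /\ on_line X B E /\ on_line X C F.

Definition orthology_center (A B C D E F X : pt) : Prop :=
  on_perp X A E F /\ on_perp X B F D /\ on_perp X C D E.

Definition orthologic_with_centers (A B C D E F X Y : pt) : Prop :=
  orthology_center A B C D E F X /\ orthology_center D E F A B C Y.

Definition Pe (a b t : R) : pt := (a * cos t, b * sin t).
Definition tpar (u : R) (i : nat) : R := - u / 3 - 2 * PI * (INR i - 1) / 3.
Definition Pi (a b u : R) (i : nat) : pt := Pe a b (tpar u i).
(* center of curvature of the ellipse at P(t_i) *)
Definition Pi2 (a b c u : R) (i : nat) : pt :=
  (c ^ 2 * (cos (tpar u i)) ^ 3 / a, - (c ^ 2 * (sin (tpar u i)) ^ 3 / b)).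

Definition perm3 (i j k : nat) : Prop :=
  (i = 1 \/ i = 2 \/ i = 3)%nat /\ (j = 1 \/ j = 2 \/ j = 3)%nat /\
  (k = 1 \/ k = 2 \/ k = 3)%nat /\ i <> j /\ j <> k /\ i <> k.

From Stdlib Require Import Reals Lra Nsatz.
Open Scope R_scope.

(* Write t for the parameter of a vertex P_i; the other two
   vertices have parameters t - 2pi/3 and t + 2pi/3 (mod 2pi), and
   u = -3t (mod 2pi).  With C = cos t, S = sin t and c^2 = a^2 - b^2:
   - P''(t) - P(t) = -(a^2 S^2 + b^2 C^2) (C/a, S/b), a nonzero multiple of
     the normal vector n(t) = (C/a, S/b) of the ellipse at P(t);
   - P(t + 2pi/3) - P(t - 2pi/3) = sqrt 3 (-a S, b C), a multiple of the
     tangent vector at P(t), which is orthogonal to n(t);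
   - P''(t + 2pi/3) - P''(t - 2pi/3) = -(3 sqrt 3 c^2 / 4) (S/a, C/b);
   - -P(-3t) - P(t) = 2 (2C^2 - 1) (-a C, b S), orthogonal to (S/a, C/b).
   Hence P_i P_i'' is the altitude from P_i, so it carries the orthocenter H,
   and the perpendicular from P_i to P_j'' P_k'' carries -M. *)

Definition scale (k : R) (p : pt) : pt := (k * fst p, k * snd p).

Lemma neq_of_psub_nonzero (E F : pt) : psub F E <> (0, 0) -> E <> F.
Proof.
  intros hd ->. apply hd. unfold psub. f_equal; ring.
Qed.

Lemma scale_nonzero (k : R) (v : pt) : k <> 0 -> v <> (0, 0) -> scale k v <> (0, 0).
Proof.
  destruct v as [x y]. unfold scale; cbn [fst snd]. intros hk hv e.
  injection e as ex ey. apply hv.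
  destruct (Rmult_integral _ _ ex), (Rmult_integral _ _ ey); subst; tauto.
Qed.

Lemma on_perp_of_directions (X A E F v w : pt) (k l : R) :
  psub X A = scale k v -> psub F E = scale l w -> l <> 0 -> w <> (0, 0) ->
  dot v w = 0 -> on_perp X A E F.
Proof.
  intros hX hF hl hw hvw. split.
  - apply neq_of_psub_nonzero. rewrite hF. exact (scale_nonzero l w hl hw).
  - rewrite hX, hF. unfold dot, scale in *; cbn [fst snd] in *.
    transitivity (k * l * (fst v * fst w + snd v * snd w)); [ring|].
    rewrite hvw. ring.
Qed.

Lemma on_perp_swap (X A E F : pt) : on_perp X A E F -> on_perp X A F E.
Proof.
  unfold on_perp, dot, psub; cbn [fst snd]. intros [hEF h]. split; [auto | lra].
Qed.

Lemma on_perp_shift_foot (X Y A E F : pt) :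
  on_perp X A E F -> on_perp Y A E F -> on_perp X Y E F.
Proof.
  unfold on_perp, dot, psub; cbn [fst snd]. intros [hEF hX] [_ hY]. split; [auto | lra].
Qed.

Lemma orthogonal_same_vector_parallel (x y v : pt) :
  v <> (0, 0) -> dot x v = 0 -> dot y v = 0 -> cross y x = 0.
Proof.
  destruct x as [x1 x2], y as [y1 y2], v as [v1 v2].
  unfold dot, cross; cbn [fst snd]. intros hv hx hy.
  destruct (Req_dec (y1 * x2 - y2 * x1) 0) as [h | h]; [exact h | exfalso].
  apply hv. f_equal.
  - apply (Rmult_eq_reg_l (y1 * x2 - y2 * x1)); [|exact h].
    transitivity (x2 * (y1 * v1 + y2 * v2) - y2 * (x1 * v1 + x2 * v2)); [ring|].
    rewrite hx, hy. ring.
  - apply (Rmult_eq_reg_l (y1 * x2 - y2 * x1)); [|exact h].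
    transitivity (y1 * (x1 * v1 + x2 * v2) - x1 * (y1 * v1 + y2 * v2)); [ring|].
    rewrite hx, hy. ring.
Qed.

Lemma on_perp_on_line (X Y A E F : pt) :
  A <> Y -> on_perp Y A E F -> on_perp X A E F -> on_line X A Y.
Proof.
  intros hAY [hEF hY] [_ hX]. split; [exact hAY|].
  apply (orthogonal_same_vector_parallel _ _ (psub F E)); auto.
  intro e. apply hEF. destruct E, F. unfold psub in e; cbn [fst snd] in e.
  injection e as e1 e2. f_equal; lra.
Qed.

Lemma cos_triple (x : R) : cos (3 * x) = 4 * cos x ^ 3 - 3 * cos x.
Proof.
  replace (3 * x) with (x + (x + x)) by ring.
  repeat rewrite ?cos_plus, ?sin_plus. pose proof (sin2_cos2 x) as h. unfold Rsqr in h.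
  cbn [pow]. nsatz.
Qed.

Lemma sin_triple (x : R) : sin (3 * x) = 3 * sin x - 4 * sin x ^ 3.
Proof.
  replace (3 * x) with (x + (x + x)) by ring.
  repeat rewrite ?cos_plus, ?sin_plus. pose proof (sin2_cos2 x) as h. unfold Rsqr in h.
  cbn [pow]. nsatz.
Qed.

Lemma sqrt3_pos : sqrt 3 > 0.
Proof. apply sqrt_lt_R0. lra. Qed.

Lemma cos_2PI3 : cos (2 * PI / 3) = - 1 / 2.
Proof.
  replace (2 * PI / 3) with (PI - PI / 3) by field.
  rewrite cos_minus, cos_PI, sin_PI, cos_PI3. lra.
Qed.

Lemma sin_2PI3 : sin (2 * PI / 3) = sqrt 3 / 2.
Proof.
  replace (2 * PI / 3) with (PI - PI / 3) by field.
  rewrite sin_minus, cos_PI, sin_PI, sin_PI3. lra.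
Qed.

Lemma rotate_minus_2PI3 (t : R) :
  cos (t - 2 * PI / 3) = - cos t / 2 + sqrt 3 * sin t / 2 /\
  sin (t - 2 * PI / 3) = - sin t / 2 - sqrt 3 * cos t / 2.
Proof. rewrite cos_minus, sin_minus, cos_2PI3, sin_2PI3. split; field. Qed.

Lemma rotate_plus_2PI3 (t : R) :
  cos (t + 2 * PI / 3) = - cos t / 2 - sqrt 3 * sin t / 2 /\
  sin (t + 2 * PI / 3) = - sin t / 2 + sqrt 3 * cos t / 2.
Proof. rewrite cos_plus, sin_plus, cos_2PI3, sin_2PI3. split; field. Qed.

Lemma weighted_unit_nonzero (p q x y : R) :
  p <> 0 -> q <> 0 -> x ^ 2 + y ^ 2 = 1 -> (p * x, q * y) <> (0, 0).
Proof.
  intros hp hq hxy e. injection e as ex ey.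
  destruct (Rmult_integral _ _ ex), (Rmult_integral _ _ ey); subst; try lra.
Qed.

Definition curv (a b c t : R) : pt :=
  (c ^ 2 * (cos t) ^ 3 / a, - (c ^ 2 * (sin t) ^ 3 / b)).

Definition normal (a b t : R) : pt := (cos t / a, sin t / b).

Definition tangent (a b t : R) : pt := (- a * sin t, b * cos t).

Definition coterminal (x y : R) : Prop := cos x = cos y /\ sin x = sin y.

Lemma coterminal_period_l (x y : R) (n : nat) : x = y + 2 * INR n * PI -> coterminal x y.
Proof. intros ->. split; [apply cos_period | apply sin_period]. Qed.

Lemma coterminal_period_r (x y : R) (n : nat) : y = x + 2 * INR n * PI -> coterminal x y.
Proof. intros ->. split; symmetry; [apply cos_period | apply sin_period]. Qed.

Lemma Pe_coterminal (a b x y : R) : coterminal x y -> Pe a b x = Pe a b y.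
Proof. intros [ec es]. unfold Pe. rewrite ec, es. reflexivity. Qed.

Lemma curv_coterminal (a b c x y : R) : coterminal x y -> curv a b c x = curv a b c y.
Proof. intros [ec es]. unfold curv. rewrite ec, es. reflexivity. Qed.

Section AtParameter.

Variables a b c t : R.
Hypothesis ha : a > 0.
Hypothesis hb : b > 0.
Hypothesis hc : c > 0.
Hypothesis hc2 : c ^ 2 = a ^ 2 - b ^ 2.

Let B := Pe a b (t - 2 * PI / 3).
Let C := Pe a b (t + 2 * PI / 3).

Lemma cos_sin_sq : cos t ^ 2 + sin t ^ 2 = 1.
Proof. pose proof (sin2_cos2 t) as h. unfold Rsqr in h. lra. Qed.

Lemma normal_nonzero : normal a b t <> (0, 0).
Proof.
  unfold normal, Rdiv. rewrite (Rmult_comm (cos t)), (Rmult_comm (sin t)).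
  apply weighted_unit_nonzero; [apply Rinv_neq_0_compat; lra ..| apply cos_sin_sq].
Qed.

Lemma tangent_nonzero : tangent a b t <> (0, 0).
Proof.
  unfold tangent. intro e. injection e as e1 e2.
  apply (weighted_unit_nonzero (- a) b (sin t) (cos t)); try lra.
  - rewrite Rplus_comm. apply cos_sin_sq.
  - rewrite e1, e2. reflexivity.
Qed.

Lemma normal_tangent_orthogonal : dot (normal a b t) (tangent a b t) = 0.
Proof. unfold dot, normal, tangent; cbn [fst snd]. field. lra. Qed.

(* The center of curvature lies on the normal at P(t), on its inner side;
   this is where c^2 = a^2 - b^2 is used. *)
Lemma curv_minus_point :
  psub (curv a b c t) (Pe a b t)
  = scale (- (a ^ 2 * sin t ^ 2 + b ^ 2 * cos t ^ 2)) (normal a b t).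
Proof.
  pose proof cos_sin_sq as h.
  unfold curv, Pe, psub, scale, normal; cbn [fst snd]. rewrite hc2.
  f_equal; field_simplify_eq; try lra; cbn [pow] in *; nsatz.
Qed.

Lemma point_neq_curv : Pe a b t <> curv a b c t.
Proof.
  apply neq_of_psub_nonzero. rewrite curv_minus_point.
  apply scale_nonzero; [|exact normal_nonzero].
  pose proof cos_sin_sq. nra.
Qed.

Lemma opposite_side_direction : psub C B = scale (sqrt 3) (tangent a b t).
Proof.
  unfold B, C, Pe, psub, scale, tangent; cbn [fst snd].
  destruct (rotate_minus_2PI3 t) as [-> ->], (rotate_plus_2PI3 t) as [-> ->].
  f_equal; field.
Qed.

Lemma curv_on_altitude : on_perp (curv a b c t) (Pe a b t) B C.
Proof.
  apply (on_perp_of_directions _ _ _ _ _ _ _ _ curv_minus_point opposite_side_direction).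
  - pose proof sqrt3_pos. lra.
  - exact tangent_nonzero.
  - exact normal_tangent_orthogonal.
Qed.

Lemma opposite_curv_side_direction :
  psub (curv a b c (t + 2 * PI / 3)) (curv a b c (t - 2 * PI / 3))
  = scale (- (3 * sqrt 3 * c ^ 2 / 4)) (sin t / a, cos t / b).
Proof.
  pose proof cos_sin_sq as h.
  assert (h3 : sqrt 3 * sqrt 3 = 3) by (apply sqrt_sqrt; lra).
  unfold curv, psub, scale; cbn [fst snd].
  destruct (rotate_minus_2PI3 t) as [-> ->], (rotate_plus_2PI3 t) as [-> ->].
  f_equal; field_simplify_eq; try lra; cbn [pow] in *; nsatz.
Qed.

Lemma antipode_minus_point :
  psub (popp (Pe a b (- (3 * t)))) (Pe a b t)
  = scale (2 * (2 * cos t ^ 2 - 1)) (- a * cos t, b * sin t).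
Proof.
  pose proof cos_sin_sq as h.
  unfold Pe, popp, psub, scale; cbn [fst snd].
  rewrite cos_neg, sin_neg, cos_triple, sin_triple.
  f_equal; cbn [pow] in *; nsatz.
Qed.

Lemma antipode_on_perp :
  on_perp (popp (Pe a b (- (3 * t)))) (Pe a b t)
          (curv a b c (t - 2 * PI / 3)) (curv a b c (t + 2 * PI / 3)).
Proof.
  apply (on_perp_of_directions _ _ _ _ _ _ _ _
           antipode_minus_point opposite_curv_side_direction).
  - pose proof sqrt3_pos. assert (c ^ 2 > 0) by nra. nra.
  - unfold Rdiv. rewrite (Rmult_comm (sin t)), (Rmult_comm (cos t)).
    apply weighted_unit_nonzero; [apply Rinv_neq_0_compat; lra ..|].
    rewrite Rplus_comm. apply cos_sin_sq.
  - unfold dot; cbn [fst snd]. field. lra.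
Qed.

Lemma vertex_facts (H : pt) :
  on_perp H (Pe a b t) B C ->
  Pe a b t <> curv a b c t /\
  on_perp (curv a b c t) (Pe a b t) B C /\
  on_line H (Pe a b t) (curv a b c t) /\
  on_perp H (curv a b c t) B C /\
  on_perp (popp (Pe a b (- (3 * t)))) (Pe a b t)
          (curv a b c (t - 2 * PI / 3)) (curv a b c (t + 2 * PI / 3)).
Proof.
  intro hH.
  refine (conj point_neq_curv (conj curv_on_altitude (conj _ (conj _ antipode_on_perp)))).
  - exact (on_perp_on_line _ _ _ _ _ point_neq_curv curv_on_altitude hH).
  - exact (on_perp_shift_foot _ _ _ _ _ hH curv_on_altitude).
Qed.

End AtParameter.

Definition cyclic3 (i j k : nat) : Prop :=
  (i = 1 /\ j = 2 /\ k = 3 \/ i = 2 /\ j = 3 /\ k = 1 \/ i = 3 /\ j = 1 /\ k = 2)%nat.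

Lemma perm3_cyclic (i j k : nat) : perm3 i j k -> cyclic3 i j k \/ cyclic3 i k j.
Proof.
  unfold cyclic3. intros [hi [hj [hk [nij [njk nik]]]]].
  destruct hi as [-> | [-> | ->]]; destruct hj as [-> | [-> | ->]];
    destruct hk as [-> | [-> | ->]]; try congruence; tauto.
Qed.

Lemma orthocenter_on_perp (P : nat -> pt) (H : pt) (i j k : nat) :
  is_orthocenter (P 1%nat) (P 2%nat) (P 3%nat) H -> cyclic3 i j k ->
  on_perp H (P i) (P j) (P k).
Proof.
  intros [_ [h1 [h2 h3]]] [[-> [-> ->]] | [[-> [-> ->]] | [-> [-> ->]]]]; assumption.
Qed.

Lemma cyclic_parameters (u : R) (i j k : nat) : cyclic3 i j k ->
  coterminal (tpar u j) (tpar u i - 2 * PI / 3) /\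
  coterminal (tpar u k) (tpar u i + 2 * PI / 3) /\
  coterminal u (- (3 * tpar u i)).
Proof.
  unfold tpar.
  intros [[-> [-> ->]] | [[-> [-> ->]] | [-> [-> ->]]]]; repeat split.
  all: first [ apply (coterminal_period_l _ _ 0); cbn [INR]; field
             | apply (coterminal_period_l _ _ 1); cbn [INR]; field
             | apply (coterminal_period_r _ _ 1); cbn [INR]; field
             | apply (coterminal_period_r _ _ 2); cbn [INR]; field ].
Qed.

Lemma vertex_facts_indexed (a b c u : R) (H : pt) (i j k : nat)
  (hab : a > b) (hb : b > 0) (hc : c > 0) (hc2 : c ^ 2 = a ^ 2 - b ^ 2) :
  cyclic3 i j k -> on_perp H (Pi a b u i) (Pi a b u j) (Pi a b u k) ->
  Pi a b u i <> Pi2 a b c u i /\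
  on_perp (Pi2 a b c u i) (Pi a b u i) (Pi a b u j) (Pi a b u k) /\
  on_line H (Pi a b u i) (Pi2 a b c u i) /\
  on_perp H (Pi2 a b c u i) (Pi a b u j) (Pi a b u k) /\
  on_perp (popp (Pe a b u)) (Pi a b u i) (Pi2 a b c u j) (Pi2 a b c u k).
Proof.
  intros hijk.
  destruct (cyclic_parameters u i j k hijk) as [ej [ek eu]].
  change (Pi2 a b c u) with (fun n => curv a b c (tpar u n)). unfold Pi. cbv beta.
  rewrite (Pe_coterminal a b _ _ ej), (Pe_coterminal a b _ _ ek),
    (curv_coterminal a b c _ _ ej), (curv_coterminal a b c _ _ ek),
    (Pe_coterminal a b _ _ eu).
  apply vertex_facts; lra.
Qed.

Lemma vertex_facts_perm (a b c u : R) (H : pt) (i j k : nat)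
  (hab : a > b) (hb : b > 0) (hc : c > 0) (hc2 : c ^ 2 = a ^ 2 - b ^ 2)
  (hH : is_orthocenter (Pi a b u 1) (Pi a b u 2) (Pi a b u 3) H) :
  perm3 i j k ->
  Pi a b u i <> Pi2 a b c u i /\
  on_perp (Pi2 a b c u i) (Pi a b u i) (Pi a b u j) (Pi a b u k) /\
  on_line H (Pi a b u i) (Pi2 a b c u i) /\
  on_perp H (Pi2 a b c u i) (Pi a b u j) (Pi a b u k) /\
  on_perp (popp (Pe a b u)) (Pi a b u i) (Pi2 a b c u j) (Pi2 a b c u k).
Proof.
  intros hperm.
  destruct (perm3_cyclic i j k hperm) as [hcyc | hcyc];
    pose proof (vertex_facts_indexed a b c u H _ _ _ hab hb hc hc2 hcyc
                  (orthocenter_on_perp (Pi a b u) H _ _ _ hH hcyc))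
      as [h1 [h2 [h3 [h4 h5]]]];
    auto 6 using on_perp_swap.
Qed.

Theorem proposition8p3 (a b c u : R) (H : pt)
  (hab : a > b) (hb : b > 0) (hc : c > 0) (hc2 : c ^ 2 = a ^ 2 - b ^ 2)
  (hH : is_orthocenter (Pi a b u 1) (Pi a b u 2) (Pi a b u 3) H) :
  let M := Pe a b u in
  (* (i) each line P_i P_i'' is the altitude from P_i and passes through H,
     and the perpendicular from P_i'' to the opposite side passes through H *)
  (forall i j k : nat, perm3 i j k ->
     Pi a b u i <> Pi2 a b c u i /\
     on_perp (Pi2 a b c u i) (Pi a b u i) (Pi a b u j) (Pi a b u k) /\
     on_line H (Pi a b u i) (Pi2 a b c u i) /\
     on_perp H (Pi2 a b c u i) (Pi a b u j) (Pi a b u k)) /\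
  perspector (Pi a b u 1) (Pi a b u 2) (Pi a b u 3)
             (Pi2 a b c u 1) (Pi2 a b c u 2) (Pi2 a b c u 3) H /\
  (* (ii) the perpendicular from P_i to P_j'' P_k'' passes through -M *)
  (forall i j k : nat, perm3 i j k ->
     on_perp (popp M) (Pi a b u i) (Pi2 a b c u j) (Pi2 a b c u k)) /\
  orthologic_with_centers (Pi a b u 1) (Pi a b u 2) (Pi a b u 3)
             (Pi2 a b c u 1) (Pi2 a b c u 2) (Pi2 a b c u 3) (popp M) H.
Proof.
  intro M.
  pose proof (fun i j k => vertex_facts_perm a b c u H i j k hab hb hc hc2 hH) as V.
  destruct (V 1 2 3 ltac:(repeat split; auto))%nat as [_ [_ [L1 [Q1 R1]]]].
  destruct (V 2 3 1 ltac:(repeat split; auto))%nat as [_ [_ [L2 [Q2 R2]]]].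
  destruct (V 3 1 2 ltac:(repeat split; auto))%nat as [_ [_ [L3 [Q3 R3]]]].
  split; [|split; [|split]].
  - intros i j k hperm. destruct (V i j k hperm) as [h1 [h2 [h3 [h4 _]]]]. auto.
  - exact (conj L1 (conj L2 L3)).
  - intros i j k hperm. apply (V i j k hperm).
  - exact (conj (conj R1 (conj R2 R3)) (conj Q1 (conj Q2 Q3))).
Qed.
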